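(* Let $S$ be a numerical semigroup with conductor $c$, let $m\ge 2c-1$ and let $r$ be a positive integer. Then among the optimal configurations of cardinality $r$ there is one which is an $(S,m,r)$-amenable set.
   Context: A numerical semigroup is a submonoid of $\mathbb N$ with finite complement; its conductor $c$ is the least element of $S$ such that $c+n\in S$ for all $n\in\mathbb N$. For $x\in S$, $\mathrm D(x)=\{\alpha\in S\mid x-\alpha\in S\}$, and for $M\subseteq S$, $\mathrm D(M)=\bigcup_{x\in M}\mathrm D(x)$. For $m\in S$, $\delta^r(m)=\min\{\sharp\mathrm D(\{m_1,\ldots,m_r\})\mid m\le m_1<\cdots<m_r,\ m_i\in S\}$. A configuration is a finite subset of $S\cap[m,\infty)$; a configuration $M$ of cardinality $r$ is optimal if $\sharp\mathrm D(M)=\delta^r(m)$. A set $M=\{m_1<\cdots<m_r\}\subseteq S$ with $2c-1\le m=m_1$ is $(S,m,r)$-amenable if $\mathrm D(m_i)\cap[m,\infty)\subseteq M$ for all $i\in\{1,\ldots,r\}$. *)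

From mathcomp Require Import all_boot.
Set Implicit Arguments. Unset Strict Implicit. Unset Printing Implicit Defensive.

Definition numerical_semigroup (S : pred nat) : Prop :=
  [/\ 0 \in S,
      (forall x y, x \in S -> y \in S -> x + y \in S) &
      exists N, forall n, N <= n -> n \in S].

Definition is_conductor (S : pred nat) (c : nat) : Prop :=
  [/\ c \in S, (forall n, c + n \in S) &
      forall c', c' \in S -> (forall n, c' + n \in S) -> c <= c'].

(* alpha \in D(x) : alpha in S and x - alpha in S (as an integer, so alpha <= x) *)
Definition inD (S : pred nat) (x a : nat) : bool :=
  [&& a \in S, a <= x & (x - a) \in S].

Definition inDset (S : pred nat) (M : seq nat) (a : nat) : bool :=
  has (fun x => inD S x a) M.

(* #D(M): all elements of D(M) are <= max M, so counting over [0, max M] *)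
Definition cardD (S : pred nat) (M : seq nat) : nat :=
  count (inDset S M) (iota 0 (\max_(x <- M) x).+1).

Definition config (S : pred nat) (m r : nat) (M : seq nat) : Prop :=
  [/\ uniq M, size M = r & forall x, x \in M -> (x \in S) && (m <= x)].

(* optimal: #D(M) = delta^r(m), i.e. #D(M) is minimal among configurations *)
Definition optimal (S : pred nat) (m r : nat) (M : seq nat) : Prop :=
  config S m r M /\
  forall M', config S m r M' -> cardD S M <= cardD S M'.

Definition amenable (S : pred nat) (c m r : nat) (M : seq nat) : Prop :=
  [/\ config S m r M,
      m \in M,
      2 * c - 1 <= m &
      forall x a, x \in M -> inD S x a -> m <= a -> a \in M].

From mathcomp Require Import all_boot.
From mathcomp Require Import zify.
From Stdlib Require Import Classical.
Set Implicit Arguments. Unset Strict Implicit.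

(* Start from any optimal configuration. Translating it down so that its least
   element is m does not increase #D: a divisor a < c of a shifted element is
   still a divisor of the original one (the cofactor is >= 2c-1-(c-1) = c),
   while a divisor a >= c of x - t gives the divisor a + t of x; this map is
   injective. Then replace the translated configuration M by the r smallest
   elements of D(M) lying above m. They include m, their divisor sets are
   contained in D(M) by transitivity of divisibility, so they are again
   optimal, and a divisor above m of one of them is a smaller element of
   D(M) above m, hence among the r smallest. *)

Lemma ex_minimizer T (P : T -> Prop) (f : T -> nat) x :
  P x -> exists2 y, P y & forall z, P z -> f y <= f z.
Proof.
move: {2}(f x) (leqnn (f x)) => n; elim: n x => [|n IH] x fx Px.
  by exists x => // z _; move: fx; rewrite leqn0 => /eqP->.
case: (classic (forall z, P z -> f x <= f z)) => [x_min | ]; first by exists x.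
move=> /not_all_ex_not[z /(imply_to_and (P z))[Pz /negP]].
rewrite -ltnNge => zx.
by apply: (IH z) => //; rewrite -ltnS (leq_trans zx).
Qed.

Lemma inDset_leq_max S M a : inDset S M a -> a <= \max_(x <- M) x.
Proof.
move=> /hasP[x xM /and3P[_ ax _]].
exact: leq_trans ax (@leq_bigmax_seq _ M xpredT (fun y => y) x xM isT).
Qed.

Lemma cardD_leq_inj S M N (f : nat -> nat) :
  injective f -> (forall a, inDset S M a -> inDset S N (f a)) ->
  cardD S M <= cardD S N.
Proof.
rewrite /cardD -!size_filter => f_inj DMN; rewrite -(size_map f).
apply: uniq_leq_size; first by rewrite map_inj_uniq // filter_uniq // iota_uniq.
move=> y /mapP[a]; rewrite mem_filter => /andP[Da _] ->.
by rewrite mem_filter DMN // mem_iota ltnS (inDset_leq_max (DMN a Da)).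
Qed.

Lemma optimal_leq_cardD S m r M N :
  optimal S m r M -> config S m r N -> cardD S N <= cardD S M ->
  optimal S m r N.
Proof.
by move=> [_ M_min] cfN NM; split=> // K cfK; apply: leq_trans NM (M_min K cfK).
Qed.

Lemma mem_take_sorted_ltn n s x a :
  sorted ltn s -> x \in take n s -> a \in s -> a <= x -> a \in take n s.
Proof.
move=> s_sorted xn sa ax; have xs := mem_take xn.
move: xn; rewrite !in_take // => /(leq_ltn_trans _); apply.
rewrite leqNgt; apply/negP => /(sorted_ltn_index ltn_trans s_sorted x a xs sa).
by rewrite ltnNge ax.
Qed.

Section Closure.

Variable S : pred nat.
Hypothesis S0 : 0 \in S.
Hypothesis Sadd : forall x y, x \in S -> y \in S -> x + y \in S.

Lemma inD_refl x : x \in S -> inD S x x.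
Proof. by move=> xS; rewrite /inD xS leqnn subnn S0. Qed.

Lemma inD_trans x y a : inD S y x -> inD S x a -> inD S y a.
Proof.
move=> /and3P[xS xy yx] /and3P[aS ax xa]; rewrite /inD aS (leq_trans ax xy) /=.
have -> : y - a = (y - x) + (x - a) by lia.
exact: Sadd.
Qed.

Definition upper_divisors m M :=
  [seq a <- iota 0 (\max_(x <- M) x).+1 | (m <= a) && inDset S M a].

Lemma mem_upper_divisors m M a :
  (a \in upper_divisors m M) = (m <= a) && inDset S M a.
Proof.
rewrite mem_filter mem_iota ltnS andbC.
by case: (inDset S M a) / idP => [/inDset_leq_max ->|]; rewrite ?andbF.
Qed.

Lemma upper_divisors_sorted m M : sorted ltn (upper_divisors m M).
Proof. exact/sorted_filter/iota_ltn_sorted/ltn_trans. Qed.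

Lemma sub_upper_divisors m r M : config S m r M -> {subset M <= upper_divisors m M}.
Proof.
move=> [_ _ MS] x xM; have /andP[xS mx] := MS x xM.
by rewrite mem_upper_divisors mx; apply/hasP; exists x => //; apply: inD_refl.
Qed.

Lemma inDset_upper_divisors m M x a :
  x \in upper_divisors m M -> inD S x a -> inDset S M a.
Proof.
rewrite mem_upper_divisors => /andP[_ /hasP[y yM Dyx]] Dxa.
by apply/hasP; exists y => //; apply: inD_trans Dyx Dxa.
Qed.

Lemma optimal_closure m r M :
  optimal S m r M -> m \in M -> 0 < r ->
  exists N, [/\ optimal S m r N, m \in N &
                forall x a, x \in N -> inD S x a -> m <= a -> a \in N].
Proof.
move=> Mopt mM r_gt0; have [[Muniq Msize _] _] := Mopt.
set C := upper_divisors m M; set N := take r C.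
have MC := sub_upper_divisors Mopt.1.
have NC : {subset N <= C} by move=> x /mem_take.
have C_sorted : sorted ltn C := upper_divisors_sorted m M.
have Csize : r <= size C by rewrite -Msize; apply: uniq_leq_size.
have N_closed x a : x \in N -> inD S x a -> m <= a -> a \in N.
  move=> xN Dxa ma; apply: (mem_take_sorted_ltn C_sorted xN); last by case/and3P: Dxa.
  by rewrite mem_upper_divisors ma (inDset_upper_divisors (NC x xN) Dxa).
have cfN : config S m r N.
  split; first exact/take_uniq/(sorted_uniq ltn_trans ltnn).
    exact: size_takel.
  by move=> x /NC; rewrite mem_upper_divisors => /andP[-> /hasP[y _ /and3P[-> _ _]]].
exists N; split=> //.
  apply: (optimal_leq_cardD Mopt cfN); apply: (@cardD_leq_inj _ _ _ id) => // a.
  by move=> /hasP[x /NC]; apply: inDset_upper_divisors.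
have [x0 N_x0] : exists x0, x0 \in N.
  by exists (nth 0 N 0); rewrite mem_nth // size_takel.
apply: (mem_take_sorted_ltn C_sorted N_x0 (MC m mM)).
by have := NC x0 N_x0; rewrite mem_upper_divisors => /andP[].
Qed.

End Closure.

Lemma mem_geq_conductor S c n : is_conductor S c -> c <= n -> n \in S.
Proof. by move=> [_ Scn _] /subnKC <-. Qed.

Section AboveConductor.

Variables (S : pred nat) (c : nat).
Hypothesis S_geq_c : forall n, c <= n -> n \in S.

Lemma exists_optimal m r : c <= m -> exists M, optimal S m r M.
Proof.
move=> cm; have cf_iota : config S m r (iota m r).
  split; [exact: iota_uniq | exact: size_iota |].
  by move=> x; rewrite mem_iota => /andP[mx _]; rewrite mx S_geq_c // (leq_trans cm).
by have [M] := ex_minimizer (cardD S) cf_iota; exists M.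
Qed.

Lemma cardD_shift t M :
  {in M, forall x, t + (2 * c - 1) <= x} ->
  cardD S (map (subn^~ t) M) <= cardD S M.
Proof.
move=> M_large; apply: (@cardD_leq_inj _ _ _ (fun a => if a < c then a else a + t)).
  by move=> a b /=; case: (ltnP a c); case: (ltnP b c); lia.
move=> a /hasP[_ /mapP[x xM ->] /and3P[aS ax xa]].
apply/hasP; exists x => //; have := M_large x xM; rewrite /inD.
case: ltnP => [ac | ca] xt.
  by rewrite aS S_geq_c /= ?andbT; lia.
have -> : x - (a + t) = x - t - a by lia.
by rewrite xa S_geq_c ?andbT; lia.
Qed.

Lemma optimal_translate m r M :
  2 * c - 1 <= m -> optimal S m r M -> 0 < r ->
  exists M', optimal S m r M' /\ m \in M'.
Proof.
move=> m_large Mopt r_gt0; have [[Muniq Msize MS] _] := Mopt.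
have M_x0 : nth 0 M 0 \in M by rewrite mem_nth // Msize.
case: (ex_minnP (ex_intro (fun n => n \in M) _ M_x0)) => n0 M_n0 n0_min.
have m_n0 : m <= n0 by case/andP: (MS n0 M_n0).
set t := n0 - m; set M' := map (subn^~ t) M.
have m_M' : m \in M' by apply/mapP; exists n0 => //; rewrite /t; lia.
have cfM' : config S m r M'.
  split; last 2 first.
  - by rewrite size_map.
  - move=> _ /mapP[x xM ->]; have := n0_min x xM => n0x.
    by rewrite S_geq_c /t; lia.
  rewrite map_inj_in_uniq // => x y xM yM /=.
  by have := n0_min x xM; have := n0_min y yM; rewrite /t; lia.
exists M'; split=> //; apply: (optimal_leq_cardD Mopt cfM'); apply: cardD_shift.
by move=> x /n0_min; rewrite /t; lia.
Qed.

End AboveConductor.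

Theorem proposition3p7 (S : pred nat) (c m r : nat) :
  numerical_semigroup S -> is_conductor S c ->
  2 * c - 1 <= m -> 0 < r ->
  exists M : seq nat, optimal S m r M /\ amenable S c m r M.
Proof.
move=> [S0 Sadd _] S_cond mc r_gt0.
have S_geq_c := mem_geq_conductor S_cond.
have [M Mopt] : exists M, optimal S m r M by apply: (exists_optimal S_geq_c); lia.
have [M' [M'opt m_M']] := optimal_translate S_geq_c mc Mopt r_gt0.
have [N [Nopt m_N N_closed]] := optimal_closure S0 Sadd M'opt m_M' r_gt0.
by exists N; split=> //; split=> //; case: Nopt.
Qed.
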